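(* Let $n,m\ge1$, $a\in\mathbb{R}^n$ with $\|a\|=1$, $d\in\mathbb{R}^m$ with $\|d\|<1$, and $\lambda\in\mathbb{R}^n$ with $\|\lambda\|=1$ and $\lambda\neq\pm a$. Let $$C=\{(x,y)\in\mathbb{R}^{n+m} : -\lambda^\mathsf{T} x+\nabla\phi_\lambda(\beta)^\mathsf{T} y\le r(\beta)\ \text{ for all }\beta\in\mathbb{R}^m,\ \|\beta\|=1\}$$ and $S=\{(x,y)\in\mathbb{R}^{n+m}:\|x\|\le\|y\|,\ a^\mathsf{T} x+d^\mathsf{T} y=-1\}$. Then $C$ is $S$-free, i.e. $\operatorname{int}(C)\cap S=\emptyset$.
   Context: $\|\cdot\|$ is the Euclidean norm. For $y\in\mathbb{R}^m$, $\phi_\lambda(y)=\max\{\lambda^\mathsf{T} x : x\in\mathbb{R}^n,\ \|x\|\le\|y\|,\ a^\mathsf{T} x+d^\mathsf{T} y\le 0\}$; under the hypotheses this is a finite convex function differentiable on $\mathbb{R}^m\setminus\{0\}$, and $\nabla\phi_\lambda(\beta)$ denotes its gradient. For $\|\beta\|=1$, $r(\beta)=0$ if $\lambda^\mathsf{T} a+d^\mathsf{T}\beta\le0$, and otherwise $r(\beta)=\dfrac{d^\mathsf{T}\beta+\lambda^\mathsf{T} a\,\phi_\lambda(\beta)}{\phi_\lambda(\beta)+d^\mathsf{T}\beta\,\lambda^\mathsf{T} a}$. *)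

From HB Require Import structures.
From mathcomp Require Import all_boot all_order all_algebra.
From mathcomp Require Import all_classical all_reals all_analysis.
Set Implicit Arguments. Unset Strict Implicit. Unset Printing Implicit Defensive.
Import Order.TTheory GRing.Theory Num.Theory.
Import numFieldNormedType.Exports.
Local Open Scope classical_set_scope.
Local Open Scope ring_scope.

Section Defs.
Variable R : realType.

Definition dotp (k : nat) (u v : 'rV[R]_k) : R := \sum_(i < k) u 0 i * v 0 i.
Definition enorm (k : nat) (u : 'rV[R]_k) : R := Num.sqrt (dotp u u).

Definition phi (n m : nat) (a lam : 'rV[R]_n) (d : 'rV[R]_m) (y : 'rV[R]_m) : R :=
  sup [set dotp lam x | x in [set x : 'rV[R]_n | enorm x <= enorm y /\
                                                 dotp a x + dotp d y <= 0]].

(* gradient = vector of partial derivatives (phi is differentiable off 0) *)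
Definition grad_phi (n m : nat) (a lam : 'rV[R]_n) (d : 'rV[R]_m) (beta : 'rV[R]_m)
  : 'rV[R]_m :=
  \row_(j < m) derive (phi a lam d) beta (delta_mx 0 j : 'rV[R]_m).

Definition rfun (n m : nat) (a lam : 'rV[R]_n) (d : 'rV[R]_m) (beta : 'rV[R]_m) : R :=
  if dotp lam a + dotp d beta <= 0 then 0
  else (dotp d beta + dotp lam a * phi a lam d beta) /
       (phi a lam d beta + dotp d beta * dotp lam a).

Definition Cset (n m : nat) (a lam : 'rV[R]_n) (d : 'rV[R]_m)
  : set ('rV[R]_n * 'rV[R]_m) :=
  [set z | forall beta : 'rV[R]_m, enorm beta = 1 ->
      - dotp lam z.1 + dotp (grad_phi a lam d beta) z.2 <= rfun a lam d beta].

Definition Sset (n m : nat) (a : 'rV[R]_n) (d : 'rV[R]_m)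
  : set ('rV[R]_n * 'rV[R]_m) :=
  [set z | enorm z.1 <= enorm z.2 /\ dotp a z.1 + dotp d z.2 = -1].

End Defs.

From HB Require Import structures.
From mathcomp Require Import all_boot all_order all_algebra.
From mathcomp Require Import all_classical all_reals all_analysis.
From mathcomp Require Import ring lra.
Set Implicit Arguments. Unset Strict Implicit. Unset Printing Implicit Defensive.
Import Order.TTheory GRing.Theory Num.Theory.
Import numFieldNormedType.Exports.
Local Open Scope classical_set_scope.
Local Open Scope ring_scope.

(* Let c = lam^T a and k = sqrt (1 - c^2).  Everywhere ||y|| >= phi_lambda y >= phi_cut y :=
   - c d^T y + k sqrt (||y||^2 - (d^T y)^2), the value of the maximisation when the cut
   a^T x + d^T y <= 0 binds; the first bound is attained where c ||y|| + d^T y <= 0 and the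
   second elsewhere.  Squeezing phi_lambda between these bounds along coordinate lines gives
   its gradient on the unit sphere.  For (x, y) in S and beta = y / ||y||, a planar
   Cauchy-Schwarz inequality then yields r(beta) <= - lam^T x + grad phi_lambda(beta)^T y, so
   (x, y) is not strictly inside the cut of beta; yet moving an interior point of C by
   - s lam keeps it in C and raises the left-hand side of that cut by s. *)

Section PlaneInequalities.
Variable R : realType.
Implicit Types c k s w t : R.

Lemma planar_cauchy_schwarz x1 x2 y1 y2 r s : 0 <= r -> 0 <= s ->
  x1 ^+ 2 + x2 ^+ 2 <= r ^+ 2 -> y1 ^+ 2 + y2 ^+ 2 <= s ^+ 2 ->
  x1 * y1 + x2 * y2 <= r * s.
Proof.
move=> r0 s0 hx hy.
have lagrange : (x1 * y1 + x2 * y2) ^+ 2 <= (r * s) ^+ 2.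
  have := sqr_ge0 (x1 * y2 - x2 * y1); rewrite exprMn.
  have := ler_pM (addr_ge0 (sqr_ge0 x1) (sqr_ge0 x2)) (addr_ge0 (sqr_ge0 y1) (sqr_ge0 y2)) hx hy.
  nra.
apply: le_trans (ler_norm _) _.
by rewrite -ler_sqr ?nnegrE ?mulr_ge0 // real_normK ?num_real.
Qed.

Lemma cross_ge0_on_arc c k s w t : 0 < k -> c ^+ 2 + k ^+ 2 = 1 ->
  s ^+ 2 + w ^+ 2 = t ^+ 2 -> 0 <= w -> 0 < t -> s < c * t -> 0 <= c * w - k * s.
Proof.
move=> k0 ck sw w0 t0 st.
(* (P, Q) are the coordinates of (s, w) in the frame rotated by the unit vector (c, k). *)
set P := c * s + k * w; set Q := c * w - k * s.
have PQ : P ^+ 2 + Q ^+ 2 = t ^+ 2.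
  by rewrite -sw -[RHS]mul1r -ck /P /Q; ring.
have sPQ : s = c * P - k * Q by rewrite -[LHS]mul1r -ck /P /Q; ring.
have wPQ : w = k * P + c * Q by rewrite -[LHS]mul1r -ck /P /Q; ring.
rewrite leNgt; apply/negP => Q0.
have Pt : P <= t by nra.
have c0 : 0 < c by nra.
have P0 : 0 < P by nra.
(* As P ^+ 2 + Q ^+ 2 = t ^+ 2, multiplying c (t - P) > - k Q by (t + P) / (- Q) gives
   - c Q > k (t + P); but w >= 0 means k P >= - c Q. *)
have cQ : - c * Q > k * (t + P) by nra.
nra.
Qed.

Lemma linear_le_on_arc c k s w t al E : 0 < k -> c ^+ 2 + k ^+ 2 = 1 ->
  s ^+ 2 + w ^+ 2 = t ^+ 2 -> 0 < w -> 0 < t -> s < c * t ->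
  E ^+ 2 <= k ^+ 2 * (t ^+ 2 - al ^+ 2) -> al <= s ->
  c * al + E <= c * s + k * w.
Proof.
move=> k0 ck sw w0 t0 st hE als.
have cs : s * (k * al) + w * E <= t * (k * t).
  apply: planar_cauchy_schwarz; rewrite ?sw ?exprMn //; [exact: ltW|nra|nra].
have cross := cross_ge0_on_arc k0 ck sw (ltW w0) t0 st.
have : w * (c * al + E) <= w * (c * s + k * w).
  have cross_gap : 0 <= (c * w - k * s) * (s - al) by rewrite mulr_ge0 // subr_ge0.
  nra.
by rewrite ler_pM2l.
Qed.

End PlaneInequalities.

Section InnerProduct.
Context {R : realType} {k : nat}.
Implicit Types u v w : 'rV[R]_k.

Lemma dotpC u v : dotp u v = dotp v u.
Proof. by apply: eq_bigr => i _; rewrite mulrC. Qed.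

Lemma dotpDl u v w : dotp (u + v) w = dotp u w + dotp v w.
Proof. by rewrite /dotp -big_split; apply: eq_bigr => i _; rewrite !mxE mulrDl. Qed.

Lemma dotpZl s u v : dotp (s *: u) v = s * dotp u v.
Proof. by rewrite /dotp mulr_sumr; apply: eq_bigr => i _; rewrite !mxE mulrA. Qed.

Lemma dotpNl u v : dotp (- u) v = - dotp u v.
Proof. by rewrite -scaleN1r dotpZl mulN1r. Qed.

Lemma dotpBl u v w : dotp (u - v) w = dotp u w - dotp v w.
Proof. by rewrite dotpDl dotpNl. Qed.

Lemma dotpDr u v w : dotp w (u + v) = dotp w u + dotp w v.
Proof. by rewrite dotpC dotpDl !(dotpC w). Qed.

Lemma dotpZr s u v : dotp v (s *: u) = s * dotp v u.
Proof. by rewrite dotpC dotpZl dotpC. Qed.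

Lemma dotpNr u v : dotp v (- u) = - dotp v u.
Proof. by rewrite dotpC dotpNl dotpC. Qed.

Lemma dotpBr u v w : dotp w (u - v) = dotp w u - dotp w v.
Proof. by rewrite dotpDr dotpNr. Qed.

Lemma dotp0l u : dotp 0 u = 0.
Proof. by rewrite -(scale0r 0) dotpZl mul0r. Qed.

Lemma dotp_delta u (j : 'I_k) : dotp u (delta_mx 0 j) = u 0 j.
Proof.
rewrite /dotp (bigD1 j) //= big1 ?addr0; first by rewrite mxE !eqxx mulr1.
by move=> i /negbTE ij; rewrite mxE ij andbF mulr0.
Qed.

Lemma dotpp_ge0 u : 0 <= dotp u u.
Proof. by apply: sumr_ge0 => i _; rewrite -expr2 sqr_ge0. Qed.

Lemma dotpp_eq0 u : (dotp u u == 0) = (u == 0).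
Proof.
apply/idP/eqP => [|->]; last by rewrite dotp0l.
rewrite psumr_eq0 => [/allP u0|i _]; last by rewrite -expr2 sqr_ge0.
apply/rowP => i; have := u0 i (mem_index_enum _).
by rewrite implyTb mulf_eq0 orbb mxE => /eqP.
Qed.

Lemma enorm_ge0 u : 0 <= enorm u.
Proof. exact: sqrtr_ge0. Qed.

Lemma sqr_enorm u : enorm u ^+ 2 = dotp u u.
Proof. by rewrite sqr_sqrtr // dotpp_ge0. Qed.

Lemma dotpp_enorm1 u : enorm u = 1 -> dotp u u = 1.
Proof. by rewrite -sqr_enorm => ->; rewrite expr1n. Qed.

Lemma enormZ s u : enorm (s *: u) = `|s| * enorm u.
Proof. by rewrite /enorm dotpZl dotpZr mulrA -expr2 sqrtrM ?sqr_ge0 // sqrtr_sqr. Qed.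

Lemma dotp_sqr_le u v : dotp u v ^+ 2 <= dotp u u * dotp v v.
Proof.
have [/eqP|v0] := eqVneq (dotp v v) 0.
  by rewrite dotpp_eq0 => /eqP->; rewrite dotpC !dotp0l mulr0 expr0n.
have vp : 0 < dotp v v by rewrite lt_def v0 dotpp_ge0.
have := dotpp_ge0 (dotp v v *: u - dotp u v *: v).
rewrite !(dotpBl, dotpBr, dotpZl, dotpZr) (dotpC v u) => expand.
have : 0 <= dotp v v * (dotp v v * dotp u u - dotp u v ^+ 2) by lra.
by rewrite pmulr_rge0 // subr_ge0 mulrC.
Qed.

Lemma norm_dotp_le u v : `|dotp u v| <= enorm u * enorm v.
Proof.
rewrite -ler_sqr ?nnegrE ?mulr_ge0 ?enorm_ge0 // real_normK ?num_real //.
by rewrite exprMn !sqr_enorm dotp_sqr_le.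
Qed.

Lemma dotp_le u v : dotp u v <= enorm u * enorm v.
Proof. exact: le_trans (ler_norm _) (norm_dotp_le u v). Qed.

End InnerProduct.

Section Calculus.
Variable R : realType.

Lemma derive_line (V : normedModType R) (f : V -> R) (a v : V) l :
  is_derive (0 : R) 1 (fun h : R => f (h *: v + a)) l -> derive f a v = l.
Proof.
case=> _ <-; rewrite /derive scale0r add0r.
by congr (lim (_ @ 0^')); apply: funext => h /=; rewrite /shift scaler1 addr0.
Qed.

Lemma is_derive_squeeze (L F U : R -> R) (x l : R) :
  (\forall y \near x, L y <= F y <= U y) -> L x = F x -> U x = F x ->
  is_derive x 1 L l -> is_derive x 1 U l -> is_derive x 1 F l.
Proof.
move=> LFU LxFx UxFx [dL dLl] [dU dUl].
pose q (X : R -> R) h := h^-1 * (X (h + x) - X x).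
have qE X : (fun h => h^-1 *: ((X \o shift x) (h *: 1) - X x)) = q X.
  by apply: funext => h; rewrite /= /shift scaler1.
have qL : q L @ 0^' --> l by rewrite -qE -dLl.
have qU : q U @ 0^' --> l by rewrite -qE -dUl.
have qFL : q F - q L @ 0^' --> 0.
  apply/norm_cvg0P.
  apply: (squeeze_cvgr (f := cst 0) (h := fun h => `|q U h - q L h|)); first last.
  - by apply/norm_cvg0P; rewrite -[X in _ --> X](subrr l); exact: cvgB.
  - exact: cvg_cst.
  - near=> h.
    have /andP[Lh Uh] : L (h + x) <= F (h + x) <= U (h + x).
      near: h; apply: nbhs_dnbhs; move: LFU; rewrite nbhs0P.
      by apply: filterS => y; rewrite addrC.
    rewrite normr_ge0 !fctE /q LxFx UxFx -!mulrBr !normrM !opprB !addrA !subrK.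
    by rewrite ler_wpM2l // !ger0_norm ?subr_ge0 ?lerB // (le_trans Lh).
have qF : q F @ 0^' --> l by rewrite -[l]add0r -(subrK (q L) (q F)); exact: cvgD.
rewrite -qE in qF.
by split; [exact: cvgP qF | exact: cvg_lim qF].
Unshelve. all: end_near.
Qed.

Lemma is_derive_sqrt_quadratic (A B C : R) : 0 < C ->
  is_derive (0 : R) 1 (fun h => Num.sqrt (A * h ^+ 2 + B * h + C)) (B / (2 * Num.sqrt C)).
Proof.
move=> C0; pose p : {poly R} := A *: 'X^2 + B *: 'X + C%:P.
have -> : (fun h => Num.sqrt (A * h ^+ 2 + B * h + C)) = Num.sqrt \o horner p.
  by apply/funext => h /=; rewrite /p !hornerE.
have p0 : p.[0] = C by rewrite /p !hornerE /= !mulr0 add0r.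
have dp0 : (deriv p).[0] = B.
  by rewrite /p !(poly.derivD, poly.derivZ, poly.derivC, poly.derivX, poly.derivXn) !hornerE.
apply: is_derive_eq.
  apply: (is_derive1_comp _ (is_derive_poly p 0)).
  by rewrite p0; exact: is_derive1_sqrt.
by rewrite dp0 mulrC.
Qed.

Lemma is_derive_affine_sqrt (c1 c0 s A B C : R) : 0 < C ->
  is_derive (0 : R) 1 (fun h => c1 * h + c0 + s * Num.sqrt (A * h ^+ 2 + B * h + C))
    (c1 + s * (B / (2 * Num.sqrt C))).
Proof.
move=> C0; pose p : {poly R} := c1 *: 'X + c0%:P.
have -> : (fun h => c1 * h + c0 + s * Num.sqrt (A * h ^+ 2 + B * h + C)) =
    horner p + s *: (fun h => Num.sqrt (A * h ^+ 2 + B * h + C)).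
  by apply/funext => h; rewrite !fctE /p !hornerE.
apply: is_derive_eq.
  by apply: is_deriveD; apply: is_deriveZ; exact: is_derive_sqrt_quadratic.
rewrite /p !(poly.derivD, poly.derivZ, poly.derivC, poly.derivX) !hornerE.
by change (c1 + s * (B / (2 * Num.sqrt C)) = c1 + s * B * (2 * Num.sqrt C)^-1); rewrite mulrA.
Qed.

Lemma is_derive_continuous (f : R -> R) (x df : R) : is_derive x 1 f df -> f @ x --> f x.
Proof. by case=> /derivable1_diffP/differentiable_continuous. Qed.

End Calculus.

Lemma interior_shift (R : realType) (U V : normedModType R) (C : set (U * V)) x y v :
  interior C (x, y) -> exists2 s : R, 0 < s & C (x - s *: v, y).
Proof.
case=> -[A B] /= [xA yB] ABC; move/nbhs_ballP: xA => [eps /= eps0 xA].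
pose s := eps / (`|v| + 1).
have s0 : 0 < s by rewrite divr_gt0 // ltr_wpDl.
exists s => //; apply: (ABC (_, _)); split => //=; last exact: nbhs_singleton.
apply: xA; rewrite -ball_normE /= opprB addrC subrK normrZ gtr0_norm //.
by rewrite /s mulrAC ltr_pdivrMr ?ltr_wpDl // ltr_pM2l // ltrDl.
Qed.

Section Phi.
Variables (R : realType) (n m : nat) (a lam : 'rV[R]_n) (d : 'rV[R]_m).
Hypotheses (ha : enorm a = 1) (hd : enorm d < 1) (hlam : enorm lam = 1).

Let feasible (y : 'rV[R]_m) :=
  [set x : 'rV[R]_n | enorm x <= enorm y /\ dotp a x + dotp d y <= 0].
Let dotp_aa : dotp a a = 1 := dotpp_enorm1 ha.
Let dotp_lamlam : dotp lam lam = 1 := dotpp_enorm1 hlam.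

Lemma norm_dotp_d_le y : `|dotp d y| <= enorm y.
Proof.
apply: le_trans (norm_dotp_le d y) _.
by rewrite ler_piMl ?enorm_ge0 // ltW.
Qed.

Lemma sqr_dotp_d_lt1 beta : enorm beta = 1 -> dotp d beta ^+ 2 < 1.
Proof.
move=> hb; have rho1 : `|dotp d beta| < 1.
  by apply: le_lt_trans (norm_dotp_le d beta) _; rewrite hb mulr1.
rewrite -real_normK ?num_real //; have := normr_ge0 (dotp d beta); nra.
Qed.

Lemma sqr_dotp_d_le y : dotp d y ^+ 2 <= dotp y y.
Proof.
rewrite -sqr_enorm -[dotp d y ^+ 2]real_normK ?num_real //.
by have := norm_dotp_d_le y; have := normr_ge0 (dotp d y); nra.
Qed.

Lemma phi_le_ub y B : (forall x, feasible y x -> dotp lam x <= B) -> phi a lam d y <= B.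
Proof.
move=> ub; apply: ge_sup; last by move=> _ [x fx <-]; exact: ub.
exists (dotp lam (- enorm y *: a)), (- enorm y *: a) => //; split.
  by rewrite enormZ ha mulr1 normrN ger0_norm // enorm_ge0.
rewrite dotpZr dotp_aa mulr1.
by have := norm_dotp_d_le y; rewrite ler_norml => /andP[_]; lra.
Qed.

Lemma le_phi y x : feasible y x -> dotp lam x <= phi a lam d y.
Proof.
move=> fx; apply: ub_le_sup; last by exists x.
exists (enorm y) => _ [x' [x'y _] <-].
by apply: le_trans (dotp_le lam x') _; rewrite hlam mul1r.
Qed.

Lemma phi_le_enorm y : phi a lam d y <= enorm y.
Proof.
apply: phi_le_ub => x [xy _].
by apply: le_trans (dotp_le lam x) _; rewrite hlam mul1r.
Qed.

Lemma enorm_le_phi y : dotp lam a * enorm y + dotp d y <= 0 -> enorm y <= phi a lam d y.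
Proof.
move=> inactive; have := @le_phi y (enorm y *: lam).
rewrite dotpZr dotp_lamlam mulr1; apply; split.
  by rewrite enormZ hlam mulr1 ger0_norm // enorm_ge0.
by rewrite dotpZr (dotpC a) mulrC.
Qed.

Hypotheses (hla : lam != a) (hlma : lam != - a).
Let c := dotp lam a.
Let k := Num.sqrt (1 - c ^+ 2).
Let mu := lam - c *: a.

Lemma sqr_dotp_lam_a_lt1 : c ^+ 2 < 1.
Proof.
have := dotp_sqr_le lam a; rewrite dotp_lamlam dotp_aa mulr1 -/c le_eqVlt => /orP[|//].
rewrite sqrf_eq1 => /orP[] /eqP c1.
- have : dotp (lam - a) (lam - a) == 0.
    by rewrite !(dotpBl, dotpBr) dotp_aa dotp_lamlam (dotpC a lam) -/c; apply/eqP; lra.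
  by rewrite dotpp_eq0 subr_eq0 (negbTE hla).
- have : dotp (lam + a) (lam + a) == 0.
    by rewrite !(dotpDl, dotpDr) dotp_aa dotp_lamlam (dotpC a lam) -/c; apply/eqP; lra.
  by rewrite dotpp_eq0 addr_eq0 (negbTE hlma).
Qed.

Lemma k_gt0 : 0 < k.
Proof. by rewrite sqrtr_gt0 subr_gt0 sqr_dotp_lam_a_lt1. Qed.

Lemma sqr_k : k ^+ 2 = 1 - c ^+ 2.
Proof. by rewrite sqr_sqrtr // subr_ge0 ltW // sqr_dotp_lam_a_lt1. Qed.

Lemma dotp_mu_a : dotp mu a = 0.
Proof. by rewrite dotpBl dotpZl dotp_aa mulr1 subrr. Qed.

Lemma dotp_mu_mu : dotp mu mu = k ^+ 2.
Proof.
rewrite sqr_k {1}/mu dotpBl dotpZl (dotpC a) dotp_mu_a mulr0 subr0.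
by rewrite dotpBr dotpZr dotp_lamlam -/c; ring.
Qed.

Lemma dotp_lam_mu : dotp lam mu = k ^+ 2.
Proof. by rewrite sqr_k dotpBr dotpZr dotp_lamlam -/c; ring. Qed.

Lemma dotp_lam_split x : dotp lam x = c * dotp a x + dotp mu x.
Proof. by rewrite /mu dotpBl dotpZl; ring. Qed.

Lemma sqr_dotp_mu_le x t : enorm x <= t ->
  dotp mu x ^+ 2 <= k ^+ 2 * (t ^+ 2 - dotp a x ^+ 2).
Proof.
move=> xt; set al := dotp a x.
have := dotp_sqr_le mu (x - al *: a).
rewrite dotpBr dotpZr dotp_mu_a mulr0 subr0 dotp_mu_mu.
have -> : dotp (x - al *: a) (x - al *: a) = dotp x x - al ^+ 2.
  by rewrite !(dotpBl, dotpBr, dotpZl, dotpZr) dotp_aa (dotpC x a) -/al; ring.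
move/le_trans; apply; rewrite ler_wpM2l ?sqr_ge0 // lerB //.
by rewrite -sqr_enorm; have := enorm_ge0 x; nra.
Qed.

Definition phi_cut (y : 'rV[R]_m) :=
  - c * dotp d y + k * Num.sqrt (dotp y y - dotp d y ^+ 2).

Lemma phi_cut_le_phi y : phi_cut y <= phi a lam d y.
Proof.
set s := - dotp d y; set w := Num.sqrt (dotp y y - dotp d y ^+ 2).
have w2 : w ^+ 2 = dotp y y - s ^+ 2.
  by rewrite sqr_sqrtr /s ?subr_ge0 ?sqr_dotp_d_le //; ring.
have kn0 : k != 0 by rewrite gt_eqF // k_gt0.
(* The maximiser: the cut binds (dotp a x = s) and so does the norm bound. *)
pose x := s *: a + (w / k) *: mu.
have -> : phi_cut y = dotp lam x.
  by rewrite /x dotpDr !dotpZr dotp_lam_mu /phi_cut -/w -/c /s; field.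
apply: le_phi; split.
  rewrite /enorm ler_sqrt ?dotpp_ge0 //.
  rewrite /x dotpDl !dotpZl 2!dotpDr !dotpZr dotp_aa (dotpC a mu) dotp_mu_a dotp_mu_mu.
  rewrite (_ : _ * _ + _ = s ^+ 2 + w ^+ 2); last by field.
  by rewrite w2 addrC subrK.
by rewrite /x dotpDr !dotpZr dotp_aa (dotpC a mu) dotp_mu_a /s; lra.
Qed.

Lemma phi_le_phi_cut y : 0 < c * enorm y + dotp d y -> phi a lam d y <= phi_cut y.
Proof.
move=> active; apply: phi_le_ub => x [xy ax].
set t := enorm y in active xy *.
set s := - dotp d y; set w := Num.sqrt (dotp y y - dotp d y ^+ 2).
have dy_le : `|dotp d y| <= enorm d * t := norm_dotp_le d y.
have t0 : 0 < t.
  rewrite lt_def enorm_ge0 andbT; apply/negP => /eqP t0.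
  move: active dy_le; rewrite -/t t0 !mulr0 normr_le0 add0r => /[swap] /eqP ->; lra.
have dy_t : `|dotp d y| < t by apply: le_lt_trans dy_le _; rewrite gtr_pMl.
have sw : s ^+ 2 + w ^+ 2 = t ^+ 2.
  by rewrite sqr_sqrtr /s ?subr_ge0 ?sqr_dotp_d_le // sqr_enorm; ring.
have w0 : 0 < w.
  rewrite sqrtr_gt0 subr_gt0 -sqr_enorm -/t -real_normK ?num_real //.
  by have := normr_ge0 (dotp d y); nra.
have arc := @linear_le_on_arc _ c _ _ _ _ _ _ k_gt0 _ sw w0 t0 _ (sqr_dotp_mu_le xy).
rewrite sqr_k in arc.
by rewrite dotp_lam_split /phi_cut -/w mulNr -mulrN; apply: arc; rewrite /s; [ring|lra|lra].
Qed.

Lemma phi_cut_unit beta : enorm beta = 1 ->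
  phi_cut beta = - c * dotp d beta + k * Num.sqrt (1 - dotp d beta ^+ 2).
Proof. by move=> /dotpp_enorm1 bb; rewrite /phi_cut bb. Qed.

Lemma phi_unit_inactive beta : enorm beta = 1 -> c + dotp d beta <= 0 ->
  phi a lam d beta = 1.
Proof.
move=> hb inactive; apply/le_anti/andP; split.
  by rewrite -[X in _ <= X]hb phi_le_enorm.
by rewrite -[X in X <= _]hb enorm_le_phi // hb mulr1.
Qed.

Lemma phi_unit_active beta : enorm beta = 1 -> 0 < c + dotp d beta ->
  phi a lam d beta = - c * dotp d beta + k * Num.sqrt (1 - dotp d beta ^+ 2).
Proof.
move=> hb active; rewrite -phi_cut_unit //.
by apply/le_anti; rewrite phi_cut_le_phi phi_le_phi_cut // hb mulr1.
Qed.

Section Line.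
Variables (beta : 'rV[R]_m) (j : 'I_m).
Hypothesis hb : enorm beta = 1.
Let e : 'rV[R]_m := delta_mx 0 j.
Let b := beta 0 j.
Let dj := d 0 j.
Let rho := dotp d beta.
Let q := Num.sqrt (1 - rho ^+ 2).

Lemma dotpp_line h : dotp (h *: e + beta) (h *: e + beta) = 1 * h ^+ 2 + (2 * b) * h + 1.
Proof.
rewrite !(dotpDl, dotpDr, dotpZl, dotpZr) (dotpC e beta) !dotp_delta dotpp_enorm1 //.
by rewrite mxE !eqxx /= -/b; ring.
Qed.

Lemma dotp_d_line h : dotp d (h *: e + beta) = dj * h + rho.
Proof. by rewrite dotpDr dotpZr dotp_delta mulrC. Qed.

Lemma is_derive_enorm_line : is_derive (0 : R) 1 (fun h => enorm (h *: e + beta)) b.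
Proof.
rewrite /enorm; under eq_fun do rewrite dotpp_line.
apply: is_derive_eq; first exact: is_derive_sqrt_quadratic.
by rewrite sqrtr1 mulr1 mulrC mulKf // pnatr_eq0.
Qed.

Lemma is_derive_phi_cut_line : is_derive (0 : R) 1 (fun h => phi_cut (h *: e + beta))
  (- c * dj + k * ((2 * b - 2 * dj * rho) / (2 * q))).
Proof.
have -> : (fun h => phi_cut (h *: e + beta)) = fun h => (- c * dj) * h + (- c * rho) +
    k * Num.sqrt ((1 - dj ^+ 2) * h ^+ 2 + (2 * b - 2 * dj * rho) * h + (1 - rho ^+ 2)).
  apply: funext => h; rewrite /phi_cut dotpp_line dotp_d_line; congr (_ + _ * Num.sqrt _); ring.
by apply: is_derive_affine_sqrt; rewrite subr_gt0 sqr_dotp_d_lt1.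
Qed.

Lemma regime_line_cvg :
  (fun h => c * enorm (h *: e + beta) + dotp d (h *: e + beta)) @ (0 : R) --> c + rho.
Proof.
have -> : (fun h => c * enorm (h *: e + beta) + dotp d (h *: e + beta)) =
    fun h => dj * h + rho + c * Num.sqrt (1 * h ^+ 2 + (2 * b) * h + 1).
  by apply: funext => h; rewrite /enorm dotpp_line dotp_d_line addrC.
have -> : c + rho = dj * 0 + rho + c * Num.sqrt (1 * 0 ^+ 2 + (2 * b) * 0 + 1).
  by rewrite expr0n /= !mulr0 !add0r sqrtr1 mulr1 addrC.
exact: is_derive_continuous (is_derive_affine_sqrt _ _ _ _ _ ltr01).
Qed.

Lemma derive_phi_inactive : c + rho <= 0 -> derive (phi a lam d) beta e = b.
Proof.
move=> inactive; apply: derive_line.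
have phi0 : phi a lam d (0 *: e + beta) = 1 by rewrite scale0r add0r phi_unit_inactive.
have enorm0 : enorm (0 *: e + beta) = 1 by rewrite scale0r add0r.
have [strict|boundary] := ltrP (c + rho) 0.
  apply: (is_derive_squeeze (L := fun h => enorm (h *: e + beta))
                            (U := fun h => enorm (h *: e + beta))); rewrite ?phi0 //;
    try exact: is_derive_enorm_line.
  near=> h; rewrite phi_le_enorm andbT enorm_le_phi // ltW //.
  by near: h; exact: cvgr_lt regime_line_cvg _ strict.
have rho_c : rho = - c by lra.
have q_k : q = k by rewrite /q /k rho_c sqrrN.
apply: (is_derive_squeeze (L := fun h => phi_cut (h *: e + beta))
                          (U := fun h => enorm (h *: e + beta))); rewrite ?phi0 //.
- by near=> h; rewrite phi_cut_le_phi phi_le_enorm.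
- by rewrite scale0r add0r phi_cut_unit // -/rho -/q q_k rho_c mulrNN -!expr2 sqr_k; ring.
- have -> : b = - c * dj + k * ((2 * b - 2 * dj * rho) / (2 * q)).
    by rewrite q_k rho_c; field; rewrite gt_eqF // k_gt0.
  exact: is_derive_phi_cut_line.
- exact: is_derive_enorm_line.
Unshelve. all: end_near.
Qed.

Lemma derive_phi_active : 0 < c + rho ->
  derive (phi a lam d) beta e = - c * dj + k * ((2 * b - 2 * dj * rho) / (2 * q)).
Proof.
move=> active; apply: derive_line.
have phi0 : phi a lam d (0 *: e + beta) = phi_cut (0 *: e + beta).
  by rewrite scale0r add0r phi_unit_active // phi_cut_unit.
apply: (is_derive_squeeze (L := fun h => phi_cut (h *: e + beta))
                          (U := fun h => phi_cut (h *: e + beta))); rewrite ?phi0 //;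
  try exact: is_derive_phi_cut_line.
near=> h; rewrite phi_cut_le_phi phi_le_phi_cut //.
by near: h; exact: cvgr_gt regime_line_cvg _ active.
Unshelve. all: end_near.
Qed.

End Line.

Lemma grad_phi_inactive beta : enorm beta = 1 -> c + dotp d beta <= 0 ->
  grad_phi a lam d beta = beta.
Proof. by move=> hb inactive; apply/rowP => j; rewrite mxE derive_phi_inactive. Qed.

Lemma grad_phi_active beta : enorm beta = 1 -> 0 < c + dotp d beta ->
  grad_phi a lam d beta = (- c) *: d +
    (k / Num.sqrt (1 - dotp d beta ^+ 2)) *: (beta - dotp d beta *: d).
Proof.
move=> hb active; apply/rowP => j; rewrite mxE derive_phi_active // !mxE.
have : Num.sqrt (1 - dotp d beta ^+ 2) != 0.
  by rewrite gt_eqF // sqrtr_gt0 subr_gt0 sqr_dotp_d_lt1.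
by move=> q0; field.
Qed.

Lemma rfun_active beta : enorm beta = 1 -> 0 < c + dotp d beta ->
  rfun a lam d beta = (k * dotp d beta + c * Num.sqrt (1 - dotp d beta ^+ 2)) /
                      Num.sqrt (1 - dotp d beta ^+ 2).
Proof.
move=> hb active; rewrite /rfun -/c leNgt active /= phi_unit_active //.
set rho := dotp d beta; set q := Num.sqrt (1 - rho ^+ 2).
have q0 : q != 0 by rewrite gt_eqF // sqrtr_gt0 subr_gt0 sqr_dotp_d_lt1.
have k0 : k != 0 by rewrite gt_eqF // k_gt0.
rewrite (_ : rho + _ = k * (k * rho + c * q)); last first.
  by rewrite [RHS]mulrDr [in RHS]mulrA -expr2 sqr_k; ring.
rewrite (_ : _ + rho * c = k * q); last by ring.
by field; rewrite q0 k0.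
Qed.

Lemma Sset_enorm_gt0 x y : Sset a d (x, y) -> 0 < enorm y.
Proof.
case=> /= xy axy; have := norm_dotp_d_le y; have := norm_dotp_le a x.
by rewrite ha mul1r !ler_norml => /andP[? ?] /andP[? ?]; lra.
Qed.

Lemma Sset_above_cut x y : Sset a d (x, y) ->
  exists2 beta, enorm beta = 1 &
    rfun a lam d beta <= - dotp lam x + dotp (grad_phi a lam d beta) y.
Proof.
move=> Sxy; have t0 := Sset_enorm_gt0 Sxy; move: Sxy => [/= xy axy].
set t := enorm y in xy t0 *.
set beta := t^-1 *: y; set rho := dotp d beta.
have hb : enorm beta = 1 by rewrite enormZ ger0_norm ?invr_ge0 ?ltW // mulVf // gt_eqF.
have dy : dotp d y = t * rho by rewrite /rho dotpZr mulrA mulfV ?gt_eqF // mul1r.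
have betay : dotp beta y = t.
  by rewrite dotpZl -sqr_enorm -/t expr2 mulrA mulVf ?gt_eqF // mul1r.
exists beta => //.
have [inactive|active] := lerP (c + rho) 0.
  rewrite /rfun -/c -/rho inactive grad_phi_inactive // betay.
  by have := dotp_le lam x; rewrite hlam mul1r; lra.
rewrite rfun_active // grad_phi_active // -/rho.
set q := Num.sqrt (1 - rho ^+ 2); set al := dotp a x; set E := dotp mu x.
have qsq : q ^+ 2 = 1 - rho ^+ 2 by rewrite sqr_sqrtr // subr_ge0 ltW // sqr_dotp_d_lt1.
have q0 : 0 < q by rewrite sqrtr_gt0 subr_gt0 sqr_dotp_d_lt1.
have al_eq : al = -1 - t * rho by rewrite /al -dy; lra.
have cs : q * E + - rho * (k * al) <= 1 * (k * t).
  apply: planar_cauchy_schwarz.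
  - exact: ler01.
  - by rewrite mulr_ge0 // ltW // k_gt0.
  - by rewrite sqrrN qsq expr1n subrK.
  - by rewrite exprMn; have := sqr_dotp_mu_le xy; rewrite -/al -/E; lra.
rewrite dotp_lam_split -/al -/E dotpDl !dotpZl dotpBl dotpZl betay dy.
rewrite ler_pdivrMr //.
have -> : k / q * (t - rho * (t * rho)) = k * t * q.
  rewrite (_ : t - rho * (t * rho) = t * q ^+ 2); last by rewrite qsq; ring.
  by field; rewrite gt_eqF.
have -> : (- (c * al + E) + (- c * (t * rho) + k * t * q)) * q =
          c * q - E * q + k * t * q ^+ 2 by rewrite al_eq; ring.
rewrite qsq; rewrite al_eq in cs; nra.
Qed.

End Phi.

Unset Implicit Arguments.

Theorem theorem9 (R : realType) (n m : nat) (a lam : 'rV[R]_n) (d : 'rV[R]_m)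
  (hn : (0 < n)%N) (hm : (0 < m)%N)
  (ha : enorm a = 1) (hd : enorm d < 1) (hlam : enorm lam = 1)
  (hla : lam != a) (hlma : lam != - a) :
  interior (Cset a lam d) `&` Sset a d = set0.
Proof.
apply/seteqP; split => // -[x y] [interior_xy Sxy].
have [beta hb cut] := Sset_above_cut ha hd hlam hla hlma Sxy.
have [s s0 Cs] := interior_shift lam interior_xy.
have := Cs beta hb; rewrite /= dotpBr dotpZr dotpp_enorm1 // mulr1.
lra.
Qed.
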